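(* Let $(V,g)$ be a real vector space of dimension $n\ge3$ with non-degenerate scalar product $g$. Let $R\in\mathfrak{r}(V)$ be orthogonal to $\mathfrak{a}(V)\oplus\mathfrak{s}(V)$ and suppose $Ric(R)\neq0$. Then $Ric(R)$ is skew-symmetric and $3\,Ric(R)=Ric^*(R)$.
   Context: $\mathfrak{r}(V)$ is the space of $(0,4)$-tensors $R$ with $R(x,y,z,w)=-R(y,x,z,w)$ and $R(x,y,z,w)+R(y,z,x,w)+R(z,x,y,w)=0$; $\mathfrak{a}(V)$, resp. $\mathfrak{s}(V)$, is the subspace of those $R\in\mathfrak{r}(V)$ that are skew-symmetric, resp. symmetric, in the last two arguments. Orthogonality is with respect to the inner product on $(0,4)$-tensors induced by $g$, $\langle R,S\rangle=g^{ia}g^{jb}g^{kc}g^{ld}R_{ijkl}S_{abcd}$. $R^*(x,y,z,w):=-R(x,y,w,z)$, $Ric(R)(x,y):=g^{ij}R(e_i,x,y,e_j)$, $Ric^*(R):=Ric(R^* )$, where $(g^{ij})$ is the inverse of $g_{ij}=g(e_i,e_j)$ for a basis $\{e_i\}$. *)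

From HB Require Import structures.
From mathcomp Require Import all_boot all_order all_algebra.
From mathcomp Require Import reals.
Set Implicit Arguments. Unset Strict Implicit. Unset Printing Implicit Defensive.
Import Order.TTheory GRing.Theory Num.Theory.
Local Open Scope ring_scope.

(* V = R^n with standard basis e_i; a (0,4)-tensor is given by its components
   T i j k l = T(e_i,e_j,e_k,e_l); a (0,2)-tensor by its components. *)
Definition tensor4 (R : Type) (n : nat) := 'I_n -> 'I_n -> 'I_n -> 'I_n -> R.
Definition tensor2 (R : Type) (n : nat) := 'I_n -> 'I_n -> R.

Section Defs.
Variables (R : realType) (n : nat).

Definition nondeg_scalar_product (g : 'M[R]_n) : Prop :=
  g^T = g /\ g \in unitmx.

Definition in_r (T : tensor4 R n) : Prop :=
  (forall x y z w, T x y z w = - T y x z w) /\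
  (forall x y z w, T x y z w + T y z x w + T z x y w = 0).

Definition in_a (T : tensor4 R n) : Prop :=
  in_r T /\ forall x y z w, T x y z w = - T x y w z.

Definition in_s (T : tensor4 R n) : Prop :=
  in_r T /\ forall x y z w, T x y z w = T x y w z.

Definition tinner (g : 'M[R]_n) (T S : tensor4 R n) : R :=
  let gi := invmx g in
  \sum_(i < n) \sum_(j < n) \sum_(k < n) \sum_(l < n)
  \sum_(a < n) \sum_(b < n) \sum_(c < n) \sum_(d < n)
    gi i a * gi j b * gi k c * gi l d * T i j k l * S a b c d.

Definition orth_a_plus_s (g : 'M[R]_n) (T : tensor4 R n) : Prop :=
  forall A S : tensor4 R n, in_a A -> in_s S ->
    tinner g T (fun x y z w => A x y z w + S x y z w) = 0.

Definition tstar (T : tensor4 R n) : tensor4 R n :=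
  fun x y z w => - T x y w z.

Definition Ric (g : 'M[R]_n) (T : tensor4 R n) : tensor2 R n :=
  fun x y => \sum_(i < n) \sum_(j < n) invmx g i j * T i x y j.

Definition Ricstar (g : 'M[R]_n) (T : tensor4 R n) : tensor2 R n :=
  Ric g (tstar T).

End Defs.

From HB Require Import structures.
From mathcomp Require Import all_boot all_order all_algebra.
From mathcomp Require Import reals.
From mathcomp Require Import ring lra.
From Stdlib Require Import FunctionalExtensionality.
Set Implicit Arguments. Unset Strict Implicit. Unset Printing Implicit Defensive.
Import Order.TTheory GRing.Theory Num.Theory.
Local Open Scope ring_scope.

(* Transforming all four slots by a matrix preserves a(V) and s(V), and
   tinner g T X is the full contraction of T with X transformed by g^-1; so
   orthogonality forces the full contraction of T with every element of a(V)
   and of s(V) to vanish.  For a 2-tensor K, the tensors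
   g^-1_xz K_yw - g^-1_yz K_xw, the same with z and w exchanged, and
   g^-1_zw K_xy combine into elements of a(V) or s(V) when K is symmetric or
   skew, and their contractions with T are multiples of <K, Ric> and
   <K, Ric*>.  Symmetric K give <K, Ric> = <K, Ric*> = 0, skew K give
   <K, Ric*> = 3 <K, Ric>, and elementary K yield the claim entrywise. *)

Local Ltac tensor_ext := do 4 (apply: functional_extensionality => ?).

Section SlotAction.
Variables (R : comPzRingType) (n : nat).
Implicit Types (M N : 'M[R]_n) (X : tensor4 R n).

Definition act1 M X : tensor4 R n := fun a b c d => \sum_(i < n) M a i * X i b c d.
Definition act2 M X : tensor4 R n := fun a b c d => \sum_(i < n) M b i * X a i c d.
Definition act3 M X : tensor4 R n := fun a b c d => \sum_(i < n) M c i * X a b i d.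
Definition act4 M X : tensor4 R n := fun a b c d => \sum_(i < n) M d i * X a b c i.

Local Ltac act_comm := tensor_ext; rewrite /act1 /act2 /act3 /act4;
  under eq_bigr do rewrite big_distrr; rewrite exchange_big;
  apply: eq_bigr => ? _; rewrite big_distrr; apply: eq_bigr => ? _ /=; ring.

Lemma act2_act1 M N X : act2 M (act1 N X) = act1 N (act2 M X). Proof. act_comm. Qed.
Lemma act3_act1 M N X : act3 M (act1 N X) = act1 N (act3 M X). Proof. act_comm. Qed.
Lemma act4_act1 M N X : act4 M (act1 N X) = act1 N (act4 M X). Proof. act_comm. Qed.
Lemma act3_act2 M N X : act3 M (act2 N X) = act2 N (act3 M X). Proof. act_comm. Qed.
Lemma act4_act2 M N X : act4 M (act2 N X) = act2 N (act4 M X). Proof. act_comm. Qed.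
Lemma act4_act3 M N X : act4 M (act3 N X) = act3 N (act4 M X). Proof. act_comm. Qed.

Local Ltac act_mul := tensor_ext; rewrite /act1 /act2 /act3 /act4;
  under eq_bigr do rewrite big_distrr; rewrite exchange_big;
  apply: eq_bigr => ? _; rewrite mxE big_distrl; apply: eq_bigr => ? _ /=; ring.

Lemma act1M M N X : act1 M (act1 N X) = act1 (M *m N) X. Proof. act_mul. Qed.
Lemma act2M M N X : act2 M (act2 N X) = act2 (M *m N) X. Proof. act_mul. Qed.
Lemma act3M M N X : act3 M (act3 N X) = act3 (M *m N) X. Proof. act_mul. Qed.
Lemma act4M M N X : act4 M (act4 N X) = act4 (M *m N) X. Proof. act_mul. Qed.

Lemma sum_scalar1_mul (x : 'I_n) (F : 'I_n -> R) :
  \sum_(i < n) (1%:M : 'M[R]_n) x i * F i = F x.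
Proof.
rewrite (bigD1 x) //= big1 ?addr0; first by rewrite mxE eqxx mul1r.
by move=> i /negbTE; rewrite mxE eq_sym => ->; rewrite mul0r.
Qed.

Lemma act1_id X : act1 1%:M X = X. Proof. by tensor_ext; rewrite /act1 sum_scalar1_mul. Qed.
Lemma act2_id X : act2 1%:M X = X. Proof. by tensor_ext; rewrite /act2 sum_scalar1_mul. Qed.
Lemma act3_id X : act3 1%:M X = X. Proof. by tensor_ext; rewrite /act3 sum_scalar1_mul. Qed.
Lemma act4_id X : act4 1%:M X = X. Proof. by tensor_ext; rewrite /act4 sum_scalar1_mul. Qed.

Definition tmap M X : tensor4 R n := fun a b c d =>
  \sum_(i < n) \sum_(j < n) \sum_(k < n) \sum_(l < n)
    M a i * M b j * M c k * M d l * X i j k l.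

Lemma tmap_act M X : tmap M X = act1 M (act2 M (act3 M (act4 M X))).
Proof.
tensor_ext; rewrite /tmap /act1 /act2 /act3 /act4; apply: eq_bigr => i _.
rewrite big_distrr; apply: eq_bigr => j _ /=.
rewrite !big_distrr; apply: eq_bigr => k _ /=.
rewrite !big_distrr; apply: eq_bigr => l _ /=; ring.
Qed.

Lemma tmapK M N X : M *m N = 1%:M -> tmap M (tmap N X) = X.
Proof.
move=> MN; rewrite !tmap_act.
do 6 rewrite ?act2_act1 ?act3_act1 ?act4_act1 ?act3_act2 ?act4_act2 ?act4_act3.
by rewrite act1M act2M act3M act4M MN act1_id act2_id act3_id act4_id.
Qed.

Lemma sum_rot3 (F : 'I_n -> 'I_n -> 'I_n -> R) :
  \sum_(i < n) \sum_(j < n) \sum_(k < n) F i j k =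
  \sum_(i < n) \sum_(j < n) \sum_(k < n) F j k i.
Proof. rewrite [RHS]exchange_big /=; apply: eq_bigr => j _; exact: exchange_big. Qed.

Lemma tmap_skew12 M X : (forall x y z w, X x y z w = - X y x z w) ->
  forall a b c d, tmap M X a b c d = - tmap M X b a c d.
Proof.
move=> skX a b c d; rewrite /tmap [in RHS]exchange_big -sumrN; apply: eq_bigr => i _.
rewrite -sumrN; apply: eq_bigr => j _; rewrite -sumrN; apply: eq_bigr => k _.
rewrite -sumrN; apply: eq_bigr => l _; rewrite skX; ring.
Qed.

Lemma tmap_skew34 M X : (forall x y z w, X x y z w = - X x y w z) ->
  forall a b c d, tmap M X a b c d = - tmap M X a b d c.
Proof.
move=> skX a b c d; rewrite /tmap -sumrN; apply: eq_bigr => i _.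
rewrite -sumrN; apply: eq_bigr => j _; rewrite [in RHS]exchange_big -sumrN.
apply: eq_bigr => k _; rewrite -sumrN; apply: eq_bigr => l _; rewrite skX; ring.
Qed.

Lemma tmap_sym34 M X : (forall x y z w, X x y z w = X x y w z) ->
  forall a b c d, tmap M X a b c d = tmap M X a b d c.
Proof.
move=> symX a b c d; rewrite /tmap; apply: eq_bigr => i _; apply: eq_bigr => j _.
rewrite [in RHS]exchange_big; apply: eq_bigr => k _; apply: eq_bigr => l _.
rewrite symX; ring.
Qed.

Lemma tmap_bianchi M X :
  (forall x y z w, X x y z w + X y z x w + X z x y w = 0) ->
  forall a b c d, tmap M X a b c d + tmap M X b c a d + tmap M X c a b d = 0.
Proof.
move=> bX a b c d.
have -> : tmap M X b c a d = \sum_(i < n) \sum_(j < n) \sum_(k < n) \sum_(l < n)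
    M a i * M b j * M c k * M d l * X j k i l.
  by rewrite /tmap sum_rot3; do 4 (apply: eq_bigr => ? _); ring.
have -> : tmap M X c a b d = \sum_(i < n) \sum_(j < n) \sum_(k < n) \sum_(l < n)
    M a i * M b j * M c k * M d l * X k i j l.
  by rewrite /tmap sum_rot3 sum_rot3; do 4 (apply: eq_bigr => ? _); ring.
rewrite /tmap -!big_split big1 // => i _; rewrite -!big_split big1 // => j _.
rewrite -!big_split big1 // => k _; rewrite -!big_split big1 // => l _ /=.
by rewrite -!mulrDr bX mulr0.
Qed.

End SlotAction.

Section Pairing.
Variables (R : comPzRingType) (n : nat).
Implicit Types (T Y : tensor4 R n) (K F : tensor2 R n).

Definition tpair T Y : R :=
  \sum_(i < n) \sum_(j < n) \sum_(k < n) \sum_(l < n) T i j k l * Y i j k l.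

Definition mpair K F : R := \sum_(i < n) \sum_(j < n) K i j * F i j.

Lemma tpairD T Y1 Y2 :
  tpair T (fun i j k l => Y1 i j k l + Y2 i j k l) = tpair T Y1 + tpair T Y2.
Proof.
rewrite /tpair -big_split; apply: eq_bigr => ? _; rewrite -big_split.
apply: eq_bigr => ? _; rewrite -big_split; apply: eq_bigr => ? _.
rewrite -big_split; apply: eq_bigr => ? _ /=; ring.
Qed.

Lemma tpairB T Y1 Y2 :
  tpair T (fun i j k l => Y1 i j k l - Y2 i j k l) = tpair T Y1 - tpair T Y2.
Proof.
rewrite /tpair -sumrB; apply: eq_bigr => ? _; rewrite -sumrB.
apply: eq_bigr => ? _; rewrite -sumrB; apply: eq_bigr => ? _.
rewrite -sumrB; apply: eq_bigr => ? _ /=; ring.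
Qed.

Lemma tpairZ T c Y : tpair T (fun i j k l => c * Y i j k l) = c * tpair T Y.
Proof.
rewrite /tpair big_distrr; apply: eq_bigr => ? _; rewrite big_distrr.
apply: eq_bigr => ? _; rewrite big_distrr; apply: eq_bigr => ? _.
rewrite big_distrr; apply: eq_bigr => ? _ /=; ring.
Qed.

Definition sym2 K := forall a b, K a b = K b a.
Definition skew2 K := forall a b, K a b = - K b a.

Lemma mpair_skew_transposeB K F : skew2 K ->
  mpair K (fun i j => F j i - F i j) = - 2 * mpair K F.
Proof.
move=> skK; have transposeE : mpair K (fun i j => F j i) = - mpair K F.
  rewrite /mpair exchange_big -sumrN; apply: eq_bigr => i _.
  by rewrite -sumrN; apply: eq_bigr => j _ /=; rewrite skK mulNr.
have -> : - 2 * mpair K F = mpair K (fun i j => F j i) - mpair K F.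
  by rewrite transposeE; ring.
rewrite /mpair -sumrB; apply: eq_bigr => i _.
by rewrite -sumrB; apply: eq_bigr => j _; rewrite mulrBr.
Qed.

Definition delta2 (x y : 'I_n) : tensor2 R n := fun i j => ((i == x) && (j == y))%:R.
Definition sym_delta2 x y : tensor2 R n := fun i j => delta2 x y i j + delta2 y x i j.
Definition skew_delta2 x y : tensor2 R n := fun i j => delta2 x y i j - delta2 y x i j.

Lemma sym_delta2_sym x y : sym2 (sym_delta2 x y).
Proof. by move=> a b; rewrite /sym_delta2 /delta2 addrC [(b == x) && _]andbC [(b == y) && _]andbC. Qed.

Lemma skew_delta2_skew x y : skew2 (skew_delta2 x y).
Proof.
by move=> a b; rewrite /skew_delta2 /delta2 opprB [(b == x) && _]andbC [(b == y) && _]andbC.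
Qed.

Lemma mpair_delta2 x y F : mpair (delta2 x y) F = F x y.
Proof.
rewrite /mpair (bigD1 x) //= [X in _ + X]big1 => [|i /negbTE neq_ix]; last first.
  by apply: big1 => j _; rewrite /delta2 neq_ix mul0r.
rewrite addr0 (bigD1 y) //= [X in _ + X]big1 => [|j /negbTE neq_jy]; last first.
  by rewrite /delta2 neq_jy andbF mul0r.
by rewrite /delta2 !eqxx mul1r addr0.
Qed.

Lemma mpair_sym_delta2 x y F : mpair (sym_delta2 x y) F = F x y + F y x.
Proof.
rewrite -!mpair_delta2 /mpair -big_split; apply: eq_bigr => ? _.
by rewrite -big_split; apply: eq_bigr => ? _; rewrite mulrDl.
Qed.

Lemma mpair_skew_delta2 x y F : mpair (skew_delta2 x y) F = F x y - F y x.
Proof.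
rewrite -!mpair_delta2 /mpair -sumrB; apply: eq_bigr => ? _.
by rewrite -sumrB; apply: eq_bigr => ? _; rewrite mulrBl.
Qed.

End Pairing.

Section Curvature.
Variables (R : realType) (n : nat).
Implicit Types (g G M : 'M[R]_n) (T Y : tensor4 R n) (K : tensor2 R n).

Lemma tmap_in_r M Y : in_r Y -> in_r (tmap M Y).
Proof. by case=> skY bY; split; [apply: tmap_skew12 | apply: tmap_bianchi]. Qed.

Lemma tmap_in_a M Y : in_a Y -> in_a (tmap M Y).
Proof. by case=> rY skY; split; [apply: tmap_in_r | apply: tmap_skew34]. Qed.

Lemma tmap_in_s M Y : in_s Y -> in_s (tmap M Y).
Proof. by case=> rY symY; split; [apply: tmap_in_r | apply: tmap_sym34]. Qed.

Lemma zero_in_r : in_r (fun _ _ _ _ : 'I_n => 0 : R).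
Proof. by split=> *; rewrite ?oppr0 ?addr0. Qed.

Lemma zero_in_a : in_a (fun _ _ _ _ : 'I_n => 0 : R).
Proof. by split=> [|*]; rewrite ?oppr0 //; exact: zero_in_r. Qed.

Lemma zero_in_s : in_s (fun _ _ _ _ : 'I_n => 0 : R).
Proof. by split=> [|*] //; exact: zero_in_r. Qed.

Lemma tinnerE g T X : tinner g T X = tpair T (tmap (invmx g) X).
Proof.
rewrite /tinner /tpair /tmap; do 4 (apply: eq_bigr => ? _).
do 4 (rewrite big_distrr; apply: eq_bigr => ? _ /=).
ring.
Qed.

Lemma tpair_in_a_eq0 g T A : nondeg_scalar_product g ->
  orth_a_plus_s g T -> in_a A -> tpair T A = 0.
Proof.
move=> [_ g_unit] orthT aA.
have := orthT _ _ (tmap_in_a g aA) zero_in_s.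
have -> : (fun x y z w => tmap g A x y z w + (fun _ _ _ _ : 'I_n => 0 : R) x y z w)
    = tmap g A by tensor_ext; rewrite addr0.
by rewrite tinnerE tmapK // mulVmx.
Qed.

Lemma tpair_in_s_eq0 g T S : nondeg_scalar_product g ->
  orth_a_plus_s g T -> in_s S -> tpair T S = 0.
Proof.
move=> [_ g_unit] orthT sS.
have := orthT _ _ zero_in_a (tmap_in_s g sS).
have -> : (fun x y z w => (fun _ _ _ _ : 'I_n => 0 : R) x y z w + tmap g S x y z w)
    = tmap g S by tensor_ext; rewrite add0r.
by rewrite tinnerE tmapK // mulVmx.
Qed.

Lemma tpair_G13_K24 g T K :
  tpair T (fun i j k l => invmx g i k * K j l) = - mpair K (Ricstar g T).
Proof.
rewrite /tpair exchange_big /mpair /Ricstar /Ric /tstar -sumrN; apply: eq_bigr => j _.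
rewrite (sum_rot3 (fun i k l => T i j k l * (invmx g i k * K j l))) -sumrN.
apply: eq_bigr => l _; rewrite big_distrr -sumrN; apply: eq_bigr => i _.
by rewrite big_distrr -sumrN; apply: eq_bigr => k _ /=; ring.
Qed.

Lemma tpair_G23_K14 g T K : in_r T ->
  tpair T (fun i j k l => invmx g j k * K i l) = mpair K (Ricstar g T).
Proof.
move=> [skT _]; rewrite /tpair /mpair /Ricstar /Ric /tstar; apply: eq_bigr => i _.
rewrite (sum_rot3 (fun j k l => T i j k l * (invmx g j k * K i l))).
apply: eq_bigr => l _; rewrite big_distrr; apply: eq_bigr => j _.
by rewrite big_distrr; apply: eq_bigr => k _ /=; rewrite skT; ring.
Qed.

Lemma tpair_G14_K23 g T K :
  tpair T (fun i j k l => invmx g i l * K j k) = mpair K (Ric g T).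
Proof.
rewrite /tpair exchange_big /mpair /Ric; apply: eq_bigr => j _.
rewrite exchange_big; apply: eq_bigr => k _; rewrite big_distrr.
by apply: eq_bigr => i _; rewrite big_distrr; apply: eq_bigr => l _ /=; ring.
Qed.

Lemma tpair_G24_K13 g T K : in_r T ->
  tpair T (fun i j k l => invmx g j l * K i k) = - mpair K (Ric g T).
Proof.
move=> [skT _]; rewrite /tpair /mpair /Ric -sumrN; apply: eq_bigr => i _.
rewrite exchange_big -sumrN; apply: eq_bigr => k _; rewrite big_distrr -sumrN.
apply: eq_bigr => j _; rewrite big_distrr -sumrN; apply: eq_bigr => l _ /=.
by rewrite skT; ring.
Qed.

(* The first Bianchi identity turns the trace over the last two slots into
   a difference of Ricci contractions. *)
Lemma tpair_G34_K12 g T K : in_r T ->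
  tpair T (fun i j k l => invmx g k l * K i j)
  = mpair K (fun i j => Ric g T j i - Ric g T i j).
Proof.
move=> [skT bT]; rewrite /tpair /mpair /Ric; apply: eq_bigr => i _.
apply: eq_bigr => j _; rewrite -sumrB big_distrr; apply: eq_bigr => k _.
rewrite -sumrB big_distrr; apply: eq_bigr => l _ /=.
have -> : T i j k l = T k j i l - T k i j l by have := bT i j k l; rewrite (skT j k); lra.
ring.
Qed.

Definition alt13 G K : tensor4 R n := fun x y z w => G x z * K y w - G y z * K x w.
Definition alt14 G K : tensor4 R n := fun x y z w => G x w * K y z - G y w * K x z.
Definition outer34 G K : tensor4 R n := fun x y z w => G z w * K x y.

Lemma tpair_alt13 g T K : in_r T ->
  tpair T (alt13 (invmx g) K) = - 2 * mpair K (Ricstar g T).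
Proof. by move=> rT; rewrite /alt13 tpairB tpair_G13_K24 tpair_G23_K14 //; ring. Qed.

Lemma tpair_alt14 g T K : in_r T ->
  tpair T (alt14 (invmx g) K) = 2 * mpair K (Ric g T).
Proof. by move=> rT; rewrite /alt14 tpairB tpair_G14_K23 tpair_G24_K13 //; ring. Qed.

Lemma tpair_outer34 g T K : in_r T -> skew2 K ->
  tpair T (outer34 (invmx g) K) = - 2 * mpair K (Ric g T).
Proof.
move=> rT skK; rewrite /outer34 tpair_G34_K12 //.
exact: mpair_skew_transposeB.
Qed.

Section TestTensors.
Variables (G : 'M[R]_n) (K : tensor2 R n).
Hypothesis symG : G^T = G.

Let symGE a b : G a b = G b a. Proof. by rewrite -[in RHS]symG mxE. Qed.

Lemma alt13B_alt14_in_a : sym2 K ->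
  in_a (fun x y z w => alt13 G K x y z w - alt14 G K x y z w).
Proof.
move=> symK; rewrite /alt13 /alt14; split; [split|] => x y z w.
- by ring.
- by rewrite (symGE y x) (symGE z x) (symGE z y) (symK z x) (symK y x) (symK z y); ring.
- by ring.
Qed.

Lemma alt13D_alt14_in_s : sym2 K ->
  in_s (fun x y z w => alt13 G K x y z w + alt14 G K x y z w).
Proof.
move=> symK; rewrite /alt13 /alt14; split; [split|] => x y z w.
- by ring.
- by rewrite (symGE y x) (symGE z x) (symGE z y) (symK z x) (symK y x) (symK z y); ring.
- by ring.
Qed.

Lemma alt13D_alt14B_outer34_in_s : skew2 K ->
  in_s (fun x y z w =>
    alt13 G K x y z w + alt14 G K x y z w - 2 * outer34 G K x y z w).
Proof.
move=> skK; rewrite /alt13 /alt14 /outer34; split; [split|] => x y z w.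
- by rewrite (skK y x); ring.
- by rewrite (symGE y x) (symGE z x) (symGE z y) (skK z x) (skK y x) (skK z y); ring.
- by rewrite (symGE w z); ring.
Qed.

End TestTensors.

Lemma invmx_sym g : g^T = g -> (invmx g)^T = invmx g.
Proof. by move=> symg; rewrite trmx_inv symg. Qed.

Section Orthogonality.
Variables (g : 'M[R]_n) (T : tensor4 R n).
Hypotheses (gP : nondeg_scalar_product g) (rT : in_r T) (orthT : orth_a_plus_s g T).

Let symG : (invmx g)^T = invmx g. Proof. by case: gP => symg _; exact: invmx_sym. Qed.

Lemma mpair_sym_Ric K : sym2 K ->
  mpair K (Ric g T) = 0 /\ mpair K (Ricstar g T) = 0.
Proof.
move=> symK.
have := tpair_in_a_eq0 gP orthT (alt13B_alt14_in_a symG symK).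
have := tpair_in_s_eq0 gP orthT (alt13D_alt14_in_s symG symK).
rewrite tpairB tpairD tpair_alt13 // tpair_alt14 //.
lra.
Qed.

Lemma mpair_skew_Ricstar K : skew2 K ->
  mpair K (Ricstar g T) = 3 * mpair K (Ric g T).
Proof.
move=> skK.
have := tpair_in_s_eq0 gP orthT (alt13D_alt14B_outer34_in_s symG skK).
rewrite tpairB tpairD tpairZ tpair_alt13 // tpair_alt14 // tpair_outer34 //.
lra.
Qed.

End Orthogonality.

End Curvature.

Theorem lemma5p3 (R : realType) (n : nat) (g : 'M[R]_n) (T : tensor4 R n) :
  (3 <= n)%N ->
  nondeg_scalar_product g ->
  in_r T ->
  orth_a_plus_s g T ->
  Ric g T <> (fun _ _ => 0) ->
  (forall x y, Ric g T x y = - Ric g T y x) /\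
  (forall x y, 3 * Ric g T x y = Ricstar g T x y).
Proof.
move=> _ gP rT orthT _.
have entrywise x y : Ric g T x y + Ric g T y x = 0 /\
    Ricstar g T x y - Ricstar g T y x = 3 * (Ric g T x y - Ric g T y x) /\
    Ricstar g T x y + Ricstar g T y x = 0.
  have [] := mpair_sym_Ric gP rT orthT (sym_delta2_sym R x y).
  rewrite !mpair_sym_delta2 => symRic symRicstar.
  by rewrite -!mpair_skew_delta2 (mpair_skew_Ricstar gP rT orthT (skew_delta2_skew R x y)).
split=> x y; have [] := entrywise x y; lra.
Qed.
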